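(* Let $f:\{0,1\}^n\to\{0,1\}$ be a read-once DNF formula with $m$ terms, each containing exactly $n/m$ variables (so every variable occurs in exactly one term). Under unit costs ($c_i=1$ for all $i$) and an arbitrary probability vector $p\in(0,1)^n$, there is a non-adaptive strategy $S$ with $$\mathrm{cost}_{c,p}(f,S)\le m\cdot \mathsf{OPT}_{\mathcal A}(f,c,p).$$
   Context: Stochastic Boolean Function Evaluation (SBFE) setup: $f:\{0,1\}^n\to\{0,1\}$ is a known Boolean function, $c\in\mathbb{R}_{>0}^n$ a cost vector and $p\in(0,1)^n$ a probability vector. The unknown input $x\in\{0,1\}^n$ is random with independent coordinates and $\Pr(x_i=1)=p_i$. The value $x_i$ can only be learned by testing variable $i$, at cost $c_i$. A strategy tests variables sequentially until $f(x)$ is determined, i.e. until $f(x')=f(x)$ for every $x'$ agreeing with $x$ on all tested coordinates. An adaptive strategy is a decision tree (the next test may depend on previous outcomes); a non-adaptive strategy is a fixed permutation of $[n]$, with variables tested in that order until $f(x)$ is determined. $\mathrm{cost}_{c,p}(f,S)$ is the expected total cost of tests performed by $S$ for random $x$. $\mathsf{OPT}_{\mathcal A}(f,c,p)$ (resp. $\mathsf{OPT}_{\mathcal N}(f,c,p)$) is the minimum of $\mathrm{cost}_{c,p}(f,S)$ over all adaptive (resp. non-adaptive) strategies. A DNF formula is a disjunction of terms, each a conjunction of literals; it is read-once if no variable is negated and distinct terms contain disjoint sets of variables. *)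

From HB Require Import structures.
From mathcomp Require Import all_boot all_order all_algebra all_fingroup.
Set Implicit Arguments. Unset Strict Implicit. Unset Printing Implicit Defensive.
Import Order.TTheory GRing.Theory Num.Theory.
Local Open Scope ring_scope.

Section SBFE.
Variables (R : realFieldType) (n : nat).

Definition input := {ffun 'I_n -> bool}.

Definition prob (p : 'I_n -> R) (x : input) : R :=
  \prod_(i < n) (if x i then p i else 1 - p i).

Definition determined (f : input -> bool) (x : input) (T : {set 'I_n}) : bool :=
  [forall y : input, [forall i in T, y i == x i] ==> (f y == f x)].

Inductive dtree : Type :=
  | Leaf : dtree
  | Node : 'I_n -> dtree -> dtree -> dtree.  (* test i; left child if x_i = 0, right if x_i = 1 *)

Fixpoint tree_cost (f : input -> bool) (c : 'I_n -> R) (t : dtree)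
    (x : input) (T : {set 'I_n}) : R :=
  if determined f x T then 0 else
  match t with
  | Leaf => 0
  | Node i t0 t1 => c i + tree_cost f c (if x i then t1 else t0) x (i |: T)
  end.

Fixpoint tree_valid (f : input -> bool) (t : dtree) (x : input) (T : {set 'I_n}) : bool :=
  determined f x T ||
  match t with
  | Leaf => false
  | Node i t0 t1 => tree_valid f (if x i then t1 else t0) x (i |: T)
  end.

Definition adaptive_strategy (f : input -> bool) (t : dtree) : Prop :=
  forall x : input, tree_valid f t x set0.

Definition cost_adaptive (f : input -> bool) (c p : 'I_n -> R) (t : dtree) : R :=
  \sum_(x : input) prob p x * tree_cost f c t x set0.

(* Non-adaptive strategies: permutations s of [n]; variable s k is tested at step k.
   The variables tested before step k form the prefix set. *)
Definition prefix (s : {perm 'I_n}) (k : 'I_n) : {set 'I_n} :=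
  [set s j | j : 'I_n & (j < k)%N].

Definition cost_nonadaptive (f : input -> bool) (c p : 'I_n -> R) (s : {perm 'I_n}) : R :=
  \sum_(x : input) prob p x *
     \sum_(k < n) (if determined f x (prefix s k) then 0 else c (s k)).

Definition dnf (m : nat) (terms : 'I_m -> {set 'I_n}) (x : input) : bool :=
  [exists j : 'I_m, [forall i in terms j, x i]].

End SBFE.

From Pilot Require Import Defs.
From HB Require Import structures.
From mathcomp Require Import all_boot all_order all_algebra all_fingroup.
From mathcomp Require Import ring lra zify.
Set Implicit Arguments. Unset Strict Implicit. Unset Printing Implicit Defensive.
Import Order.TTheory GRing.Theory Num.Theory.
Local Open Scope ring_scope.

(* Lower bound.  For an input x and a set T of tested variables, the potential
   is [k - max_tested x T] if f x holds (a true term still has that many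
   untested variables), plus, for every open term j all of whose other terms
   are false, the expected cost of refuting j by testing its untested variables
   in increasing order of probability.  It is nonpositive once f is determined
   and, averaged over the inputs consistent with T, drops by at most 1 per test;
   so its initial expectation is a lower bound on the cost of every decision tree.

   Upper bound.  The round-robin order tests, in round r, the r-th least likely
   variable of every term.  On a true input it performs at most n = m k tests; on
   a false input a round-r variable is tested only if some term has its first r
   variables true, so the number of tests is at most m times the sum over terms
   of the sequential refutation costs.  In expectation this is m times the
   initial potential. *)

Lemma sum_index (V : nmodType) (T : eqType) (F : nat -> V) (s : seq T) : uniq s ->
  \sum_(i <- s) F (index i s) = \sum_(r < size s) F r.
Proof.
elim: s F => [|a s IH] F /=; first by rewrite big_nil big_ord0.
case/andP=> as_ us; rewrite big_cons big_ord_recl eqxx; congr (_ + _).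
rewrite big_seq_cond (eq_bigr (fun i => F (index i s).+1)); last first.
  by move=> i /andP[iin _]; rewrite ifN //; apply: contraNneq as_ => ->.
by rewrite -big_seq_cond (IH (fun r => F r.+1)).
Qed.

Section Probability.
Variables (R : realFieldType) (n : nat) (p : 'I_n -> R).
Hypothesis p_range : forall i, 0 < p i < 1.

Lemma p_ge0 i : 0 <= p i. Proof. by case/andP: (p_range i) => /ltW. Qed.

Lemma prob_ge0 (x : input n) : 0 <= prob p x.
Proof.
apply: prodr_ge0 => i _; case/andP: (p_range i) => p0 p1.
by case: (x i); rewrite ?subr_ge0 ltW.
Qed.

Definition flip (i : 'I_n) (x : input n) : input n :=
  [ffun j => if j == i then ~~ x i else x j].

Lemma flipK i : involutive (flip i).
Proof.
by move=> x; apply/ffunP => j; rewrite !ffunE; case: eqP => [->|]; rewrite ?eqxx ?negbK.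
Qed.

Lemma flip_id i x : flip i x i = ~~ x i.
Proof. by rewrite ffunE eqxx. Qed.

Lemma flip_neq i j x : j != i -> flip i x j = x j.
Proof. by rewrite ffunE => /negbTE ->. Qed.

Lemma prob_flip i (x : input n) : x i ->
  prob p (flip i x) * p i = prob p x * (1 - p i).
Proof.
move=> xi; rewrite /prob (bigD1 i) // [in RHS](bigD1 i) // flip_id xi.
rewrite (eq_bigr (fun j => if x j then p j else 1 - p j)); last first.
  by move=> j ji; rewrite flip_neq.
by rewrite /=; ring.
Qed.

Definition flip_invariant (W : pred (input n)) (i : 'I_n) := forall x, W (flip i x) = W x.

Lemma sum_prob_true (W : pred (input n)) i : flip_invariant W i ->
  \sum_(x | W x && x i) prob p x = p i * \sum_(x | W x) prob p x.
Proof.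
move=> hW; rewrite [in RHS](bigID (fun x : input n => x i)) /= mulrDr.
have -> : \sum_(x | W x && ~~ x i) prob p x = \sum_(x | W x && x i) prob p (flip i x).
  rewrite (reindex_inj (can_inj (flipK i))) /=.
  by apply: eq_bigl => x; rewrite hW flip_id negbK.
have -> : p i * \sum_(x | W x && x i) prob p (flip i x) =
          (1 - p i) * \sum_(x | W x && x i) prob p x.
  rewrite !mulr_sumr; apply: eq_bigr => x /andP[_ xi].
  by rewrite mulrC prob_flip // mulrC.
by rewrite -mulrDl addrC subrK mul1r.
Qed.

Lemma sum_prob_all (s : seq 'I_n) (W : pred (input n)) : uniq s ->
  (forall i, i \in s -> flip_invariant W i) ->
  \sum_(x | W x && all x s) prob p x = (\prod_(i <- s) p i) * \sum_(x | W x) prob p x.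
Proof.
elim: s W => [|a s IH] W /=.
  by move=> _ _; rewrite big_nil mul1r; apply: eq_bigl => x; rewrite andbT.
case/andP=> as_ us hW.
rewrite big_cons -mulrA -IH //; last by move=> i iin; apply: hW; rewrite inE iin orbT.
rewrite -(sum_prob_true (W := fun x => W x && all x s)).
  by apply: eq_bigl => x; rewrite /= -andbA [x a && _]andbC.
move=> x /=; rewrite hW ?inE ?eqxx //; congr andb.
by apply: eq_in_all => i iin; rewrite flip_neq //; apply: contraNneq as_ => <-.
Qed.

(* [and_cost s] is the expected number of tests spent on the conjunction of
   the variables of [s] when they are tested in the order of [s] until one is
   false; [false_cost s] is its part spent on inputs falsifying the conjunction. *)
Fixpoint and_cost (s : seq 'I_n) : R :=
  if s is a :: s' then 1 + p a * and_cost s' else 0.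

Definition false_cost (s : seq 'I_n) : R :=
  and_cost s - (size s)%:R * \prod_(i <- s) p i.

Lemma and_cost_ge0 s : 0 <= and_cost s.
Proof. by elim: s => //= a s IH; rewrite addr_ge0 ?mulr_ge0 ?p_ge0. Qed.

Lemma and_costE s : and_cost s = \sum_(r < size s) \prod_(i <- take r s) p i.
Proof.
elim: s => [|a s IH] /=; first by rewrite big_ord0.
rewrite big_ord_recl /= big_nil IH mulr_sumr; congr (_ + _).
by apply: eq_bigr => r _; rewrite /bump /= big_cons.
Qed.

Lemma false_cost_nil : false_cost [::] = 0.
Proof. by rewrite /false_cost /= big_nil mulr1 subr0. Qed.

Definition le_prob : rel 'I_n := fun a b => p a <= p b.

Lemma le_prob_trans : transitive le_prob.
Proof. by move=> b a c; apply: le_trans. Qed.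

Lemma le_prob_total : total le_prob.
Proof. by move=> a b; apply: le_total. Qed.

(* Exchange argument: on a sorted sequence, moving any variable to the front
   never decreases the expected cost. *)
Lemma and_cost_sorted_le s i : sorted le_prob s -> i \in s ->
  and_cost s <= 1 + p i * and_cost (rem i s).
Proof.
elim: s => [|a s IH] //= srt; rewrite inE; case: eqP => [->|/eqP ai] /=.
  by rewrite eqxx.
move=> iin; rewrite eq_sym ifN //=.
have pai : p a <= p i by have /allP := order_path_min le_prob_trans srt; apply.
have IHs := IH (path_sorted srt) iin.
have : p a * and_cost s <= p a * (1 + p i * and_cost (rem i s)).
  by rewrite ler_wpM2l ?p_ge0.
have := mulr_ge0 (p_ge0 a) (and_cost_ge0 (rem i s)).
have := mulr_ge0 (p_ge0 i) (and_cost_ge0 (rem i s)).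
rewrite !mulrDr !mulr1 mulrCA; lra.
Qed.

Lemma false_cost_sorted_le s i : sorted le_prob s -> i \in s ->
  false_cost s - p i * false_cost (rem i s) <= 1 - \prod_(j <- s) p j.
Proof.
move=> srt iin; rewrite /false_cost.
have -> : \prod_(j <- s) p j = p i * \prod_(j <- rem i s) p j.
  by rewrite (perm_big _ (perm_to_rem iin)) big_cons.
have -> : size s = (size (rem i s)).+1.
  by rewrite size_rem // prednK // -has_predT; apply/hasP; exists i.
rewrite -natr1.
have := and_cost_sorted_le srt iin.
have : 0 <= (size (rem i s))%:R :> R by rewrite ler0n.
move: (and_cost s) (and_cost (rem i s)) => a b; nra.
Qed.

Lemma false_costE s :
  false_cost s = \sum_(r < size s) (\prod_(i <- take r s) p i - \prod_(i <- s) p i).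
Proof. by rewrite /false_cost and_costE sumrB sumr_const card_ord mulr_natl. Qed.

Lemma sum_prob_take_not_all (s : seq 'I_n) (W : pred (input n)) r : uniq s ->
  (forall i, i \in s -> flip_invariant W i) ->
  \sum_(x | [&& W x, all x (take r s) & ~~ all x s]) prob p x =
  (\prod_(i <- take r s) p i - \prod_(i <- s) p i) * \sum_(x | W x) prob p x.
Proof.
move=> us hW; rewrite mulrBl -!sum_prob_all ?take_uniq //; last first.
  by move=> i /mem_take; apply: hW.
rewrite [X in _ = X - _](bigID (fun x : input n => all x s)) /=.
have -> : \sum_(x | W x && all x (take r s) && all x s) prob p x =
          \sum_(x | W x && all x s) prob p x.
  apply: eq_bigl => x; rewrite -andbA; case: (boolP (all x s)) => [/allP xs|].
    by rewrite andbT; congr andb; apply/allP => i /mem_take /xs.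
  by rewrite !andbF.
by rewrite addrAC subrr add0r; apply: eq_bigl => x; rewrite andbA.
Qed.

End Probability.

Section PotentialLowerBound.
Variables (R : realFieldType) (n : nat) (p : 'I_n -> R) (f : input n -> bool).
Hypothesis p_range : forall i, 0 < p i < 1.

Definition depends_on (T : {set 'I_n}) (D : pred (input n)) :=
  forall x y : input n, (forall i, i \in T -> x i = y i) -> D x = D y.

Lemma depends_on_setU1 (T : {set 'I_n}) (D : pred (input n)) i (P : pred bool) :
  depends_on T D -> depends_on (i |: T) (fun x => D x && P (x i)).
Proof.
move=> hD x y hxy; rewrite (hxy i) ?setU11 // (hD x y) // => j jT.
by rewrite hxy // setU1r.
Qed.

Lemma determined_agree (T : {set 'I_n}) (x y : input n) : (forall i, i \in T -> x i = y i) ->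
  determined f x T -> determined f y T.
Proof.
move=> hxy /forallP hx; apply/forallP => z; apply/implyP => /forall_inP hz.
have fxy : f y = f x by apply/eqP/(implyP (hx y))/forall_inP => i /hxy ->.
rewrite fxy; apply: (implyP (hx z)); apply/forall_inP => i iT.
by rewrite (eqP (hz i iT)) hxy.
Qed.

Lemma determined_depends_on (T : {set 'I_n}) : depends_on T (fun x => determined f x T).
Proof.
move=> x y hxy; apply/idP/idP; first exact: determined_agree.
by apply: determined_agree => i iT; rewrite hxy.
Qed.

Variable phi : input n -> {set 'I_n} -> R.
Hypothesis phi_determined : forall x T, determined f x T -> phi x T <= 0.
Hypothesis phi_step : forall T i (D : pred (input n)), depends_on T D ->
  \sum_(x | D x) prob p x * phi x T <= \sum_(x | D x) prob p x * (1 + phi x (i |: T)).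

Lemma tree_cost_ge_potential (t : dtree n) T (D : pred (input n)) : depends_on T D ->
  (forall x, D x -> tree_valid f t x T) ->
  \sum_(x | D x) prob p x * phi x T <=
  \sum_(x | D x) prob p x * tree_cost f (fun _ => 1) t x T.
Proof.
elim: t T D => [|i t0 IH0 t1 IH1] T D hD hv.
  apply: ler_sum => x Dx; have dx : determined f x T by have := hv x Dx; rewrite /= orbF.
  by rewrite /= dx mulr0 mulr_ge0_le0 ?prob_ge0 ?phi_determined.
rewrite (bigID (fun x => determined f x T)) [X in _ <= X](bigID (fun x => determined f x T)) /=.
apply: lerD.
  apply: ler_sum => x /andP[_ dx].
  by rewrite /= dx mulr0 mulr_ge0_le0 ?prob_ge0 ?phi_determined.
have hD' : depends_on T (fun x => D x && ~~ determined f x T).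
  by move=> x y hxy; rewrite (hD x y hxy) (determined_depends_on hxy).
apply: le_trans (phi_step i hD') _.
under [X in _ <= X]eq_bigr => x /andP[_ /negbTE nd] do rewrite /= nd mulrDr.
under [X in X <= _]eq_bigr do rewrite mulrDr.
rewrite !big_split /= lerD2l.
rewrite (bigID (fun x : input n => x i)) [X in _ <= X](bigID (fun x : input n => x i)) /=.
apply: lerD.
  apply: le_trans (IH1 (i |: T) (fun x => (D x && ~~ determined f x T) && x i)
                     (depends_on_setU1 id hD') _) _.
    by move=> x /andP[/andP[Dx nd] xi]; have := hv x Dx; rewrite /= (negbTE nd) xi.
  by apply: ler_sum => x /andP[_ xi]; rewrite xi.
apply: le_trans (IH0 (i |: T) (fun x => (D x && ~~ determined f x T) && ~~ x i)
                   (depends_on_setU1 negb hD') _) _.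
  by move=> x /andP[/andP[Dx nd] xi]; have := hv x Dx; rewrite /= (negbTE nd) (negbTE xi).
by apply: ler_sum => x /andP[_ xi]; rewrite (negbTE xi).
Qed.

End PotentialLowerBound.

Section ReadOnceDNF.
Variables (R : realFieldType) (n m : nat) (terms : 'I_m -> {set 'I_n}) (p : 'I_n -> R).
Hypothesis p_range : forall i, 0 < p i < 1.
Hypothesis terms_disjoint : forall j1 j2, j1 != j2 -> [disjoint terms j1 & terms j2].
Hypothesis terms_cover : forall i, exists j, i \in terms j.
Variable k : nat.
Hypothesis card_terms : forall j, #|terms j| = k.

Local Notation f := (dnf terms).

Definition term_true (x : input n) j := [forall i in terms j, x i].

Definition sorted_term j := sort (le_prob p) (enum (terms j)).

Lemma sorted_term_uniq j : uniq (sorted_term j).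
Proof. by rewrite sort_uniq enum_uniq. Qed.

Lemma mem_sorted_term j i : (i \in sorted_term j) = (i \in terms j).
Proof. by rewrite mem_sort mem_enum. Qed.

Lemma sorted_term_sorted j : sorted (le_prob p) (sorted_term j).
Proof. exact: (sort_sorted (le_prob_total p)). Qed.

Lemma size_sorted_term j : size (sorted_term j) = k.
Proof. by rewrite size_sort -cardE card_terms. Qed.

Lemma term_trueE x j : term_true x j = all x (sorted_term j).
Proof.
apply/forall_inP/allP => h i; first by rewrite mem_sorted_term; apply: h.
by rewrite -mem_sorted_term; apply: h.
Qed.

Lemma notin_other_term i j0 j : i \in terms j0 -> j != j0 -> i \notin terms j.
Proof. by move=> ij0 ne; rewrite (disjointFl (terms_disjoint ne) ij0). Qed.

Lemma forall_in_flip i (x : input n) (A : {set 'I_n}) : i \notin A ->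
  [forall i' in A, flip i x i'] = [forall i' in A, x i'].
Proof.
by move=> iA; apply: eq_forallb_in => i' i'A; rewrite flip_neq //; apply: contraNneq iA => <-.
Qed.

Definition others_false j (x : input n) := [forall j', (j' != j) ==> ~~ term_true x j'].

Lemma others_false_flip j i : i \in terms j -> flip_invariant (others_false j) i.
Proof.
move=> ij x; apply: eq_forallb => j'; case: eqP => //= /eqP ne.
by rewrite /term_true forall_in_flip // (notin_other_term ij ne).
Qed.

Lemma dnfN_others_false x j : ~~ f x = others_false j x && ~~ term_true x j.
Proof.
apply/idP/andP.
  move/existsPn => h; split; last exact: h.
  by apply/forallP => j'; apply/implyP => _; exact: h.
case=> /forallP ho nj; apply/existsPn => j'; case: (eqVneq j' j) => [->//|ne].
by have := ho j'; rewrite ne.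
Qed.

Definition term_open j (x : input n) (T : {set 'I_n}) := [forall i in T :&: terms j, x i].
Definition untested j (T : {set 'I_n}) := [seq i <- sorted_term j | i \notin T].
Definition open_cost j x T := if term_open j x T then false_cost p (untested j T) else 0.
Definition false_potential x T := \sum_j (others_false j x)%:R * open_cost j x T.
Definition max_tested x T := (\max_(j | term_true x j) #|T :&: terms j|)%N.
Definition true_potential x T : R := if f x then k%:R - (max_tested x T)%:R else 0.
Definition potential x T := true_potential x T + false_potential x T.

Lemma determined_true_term x T : determined f x T -> f x ->
  exists j, terms j \subset T /\ term_true x j.
Proof.
move=> /forallP /(_ [ffun i => (i \in T) && x i]) /implyP hd fx.
have : f [ffun i => (i \in T) && x i].
  by rewrite (eqP (hd _)) //; apply/forall_inP => i iT; rewrite ffunE iT.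
case/existsP => j /forall_inP hj; exists j; split.
  by apply/subsetP => i /hj; rewrite ffunE => /andP[].
by apply/forall_inP => i /hj; rewrite ffunE => /andP[].
Qed.

Lemma determined_false_not_open x T j : determined f x T -> ~~ f x -> ~~ term_open j x T.
Proof.
move=> /forallP /(_ [ffun i => (i \notin T) || x i]) /implyP hd fx.
have : ~~ f [ffun i => (i \notin T) || x i].
  by rewrite (eqP (hd _)) //; apply/forall_inP => i iT; rewrite ffunE iT.
move/existsPn /(_ j) /forall_inPn => [i ij]; rewrite ffunE negb_or negbK => /andP[iT xi].
by apply/forall_inP => /(_ i); rewrite inE iT ij => /(_ isT); exact/negP.
Qed.

Lemma potential_determined_le0 x T : determined f x T -> potential x T <= 0.
Proof.
move=> dx; rewrite /potential /true_potential.
case fx: (f x); last first.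
  rewrite add0r /false_potential big1 // => j _.
  by rewrite /open_cost (negbTE (determined_false_not_open j dx (negbT fx))) mulr0.
have [j0 [sub tj0]] := determined_true_term dx fx.
have -> : false_potential x T = 0.
  rewrite /false_potential big1 // => j _; case: (eqVneq j j0) => [->|ne].
    rewrite /open_cost; case: ifP => _; last by rewrite mulr0.
    have -> : untested j0 T = [::].
      apply/eqP; rewrite -size_eq0 size_filter -leqn0 leqNgt -has_count.
      by apply/hasP => -[i]; rewrite mem_sorted_term => /(subsetP sub) ->.
    by rewrite false_cost_nil mulr0.
  suff -> : others_false j x = false by rewrite mul0r.
  by apply/negbTE/forallPn; exists j0; rewrite negb_imply negbK tj0 andbT eq_sym.
rewrite addr0 subr_le0 ler_nat -(card_terms j0) -{1}(setIidPr sub).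
exact: (leq_bigmax_cond (F := fun j => #|T :&: terms j|)).
Qed.

Lemma true_potential_step x T i : true_potential x T <= (f x)%:R + true_potential x (i |: T).
Proof.
rewrite /true_potential; case: (f x); last by rewrite addr0.
suff : (max_tested x (i |: T) <= (max_tested x T).+1)%N.
  by rewrite -(ler_nat R) -natr1 /= => h; lra.
apply/bigmax_leqP => j tj.
apply: (@leq_trans (#|T :&: terms j|).+1); last first.
  by rewrite ltnS; apply: (leq_bigmax_cond (F := fun j => #|T :&: terms j|)).
apply: (@leq_trans #|i |: (T :&: terms j)|); last by rewrite cardsU1; case: (i \notin _).
apply: subset_leq_card; apply/subsetP => i'.
by rewrite !inE => /andP[/orP[->|->] ->]; rewrite ?orbT.
Qed.

Lemma term_open_setU1 x T i j : i \in terms j ->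
  term_open j x (i |: T) = term_open j x T && x i.
Proof.
move=> ij; apply/forall_inP/andP => [h|[/forall_inP h xi] i'].
  split; last by apply: h; rewrite !inE eqxx ij.
  by apply/forall_inP => i' /setIP[i'T i'j]; apply: h; rewrite !inE i'T i'j orbT.
by rewrite !inE => /andP[/orP[/eqP->|i'T] i'j] //; apply: h; rewrite inE i'T.
Qed.

Lemma untested_setU1 j T i : untested j (i |: T) = rem i (untested j T).
Proof.
rewrite rem_filter; last exact/filter_uniq/sorted_term_uniq.
by rewrite /untested -filter_predI; apply: eq_filter => i' /=; rewrite !inE negb_or andbC.
Qed.

Lemma open_cost_setU1_other x T i j0 j : i \in terms j0 -> j != j0 ->
  open_cost j x (i |: T) = open_cost j x T.
Proof.
move=> ij0 ne; have ij := notin_other_term ij0 ne; rewrite /open_cost /term_open.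
have -> : (i |: T) :&: terms j = T :&: terms j.
  by apply/setP => i'; rewrite !inE; case: eqP => [->|] //; rewrite (negbTE ij) !andbF.
suff -> : untested j (i |: T) = untested j T by [].
apply: eq_in_filter => i'; rewrite mem_sorted_term !inE => i'j.
by case: eqP => // ei; rewrite -ei i'j in ij.
Qed.

Lemma false_potential_setU1 x T i j0 : i \in terms j0 ->
  false_potential x T = false_potential x (i |: T) +
    (others_false j0 x && term_open j0 x T)%:R *
    (false_cost p (untested j0 T) - (x i)%:R * false_cost p (rem i (untested j0 T))).
Proof.
move=> ij0; rewrite /false_potential (bigD1 j0) // [in X in _ = X + _](bigD1 j0) //=.
rewrite [in X in _ = X + _](eq_bigr (fun j => (others_false j x)%:R * open_cost j x T)); last first.
  by move=> j ne; rewrite (open_cost_setU1_other _ _ ij0 ne).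
rewrite /open_cost term_open_setU1 // untested_setU1.
by case: (others_false j0 x); case: (term_open j0 x T); case: (x i) => /=; ring.
Qed.

Lemma term_true_open x T j : term_open j x T -> term_true x j = all x (untested j T).
Proof.
move=> /forall_inP ho; rewrite term_trueE; apply/allP/allP => h i.
  by rewrite mem_filter => /andP[_]; apply: h.
move=> ij; case: (boolP (i \in T)) => iT.
  by apply: ho; rewrite inE iT -mem_sorted_term.
by apply: h; rewrite mem_filter iT.
Qed.

Lemma open_event_flip (D : pred (input n)) T j i : depends_on T D -> i \in untested j T ->
  flip_invariant (fun x => [&& D x, others_false j x & term_open j x T]) i.
Proof.
move=> hD; rewrite mem_filter mem_sorted_term => /andP[iT ij] x.
rewrite others_false_flip // /term_open forall_in_flip ?inE ?negb_and ?iT //.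
by rewrite (hD _ x) // => i' i'T; rewrite flip_neq //; apply: contraNneq iT => <-.
Qed.

Lemma false_potential_step T i (D : pred (input n)) : depends_on T D ->
  \sum_(x | D x) prob p x * false_potential x T <=
  \sum_(x | D x) prob p x * ((~~ f x)%:R + false_potential x (i |: T)).
Proof.
move=> hD; case: (boolP (i \in T)) => iT.
  rewrite (setUidPr _) ?sub1set //; apply: ler_sum => x _.
  by rewrite ler_wpM2l ?prob_ge0 // lerDr ler0n.
have [j0 ij0] := terms_cover i.
set L := untested j0 T.
set W := fun x => [&& D x, others_false j0 x & term_open j0 x T].
have iL : i \in L by rewrite mem_filter iT mem_sorted_term.
have hW : forall i', i' \in L -> flip_invariant W i' by move=> i'; apply: open_event_flip.
have PW_ge0 : 0 <= \sum_(x | W x) prob p x by apply: sumr_ge0 => x _; apply: prob_ge0.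
under eq_bigr do rewrite (false_potential_setU1 _ _ ij0) mulrDr.
under [X in _ <= X]eq_bigr do rewrite mulrDr addrC.
rewrite !big_split /= lerD2l -/L.
have -> : \sum_(x | D x) prob p x * ((others_false j0 x && term_open j0 x T)%:R *
            (false_cost p L - (x i)%:R * false_cost p (rem i L))) =
          (false_cost p L - p i * false_cost p (rem i L)) * \sum_(x | W x) prob p x.
  rewrite mulrBl [_ * false_cost p _ * _]mulrAC -(sum_prob_true p (hW i iL)).
  rewrite mulr_sumr mulr_suml [X in _ = _ - X]big_mkcondr -sumrB big_mkcondr /=.
  apply: eq_bigr => x _.
  by case: (others_false j0 x && term_open j0 x T); case: (x i) => /=; ring.
(* The exchange inequality bounds the expected drop by the probability that
   term [j0] gets refuted, which forces f to be false. *)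
apply: le_trans (_ : (1 - \prod_(j <- L) p j) * \sum_(x | W x) prob p x <= _).
  rewrite ler_wpM2r // false_cost_sorted_le //.
  exact/sorted_filter/sorted_term_sorted/le_prob_trans.
rewrite [X in (X - _) * _](_ : 1 = \prod_(j <- take 0 L) p j); last by rewrite take0 big_nil.
rewrite -sum_prob_take_not_all ?filter_uniq ?sorted_term_uniq //.
rewrite [X in X <= _]big_mkcond [X in _ <= X]big_mkcond /=; apply: ler_sum => x _.
rewrite /W; case: (D x) => //=.
have ge0 : 0 <= prob p x * (~~ f x)%:R by rewrite mulr_ge0 ?prob_ge0.
case: (boolP (others_false j0 x)) => //= ox; case: (boolP (term_open j0 x T)) => //= ox'.
rewrite take0 /=; case: (boolP (all x L)) => //= nall.
by rewrite (dnfN_others_false x j0) ox (term_true_open ox') nall mulr1.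
Qed.

Lemma potential_step T i (D : pred (input n)) : depends_on T D ->
  \sum_(x | D x) prob p x * potential x T <=
  \sum_(x | D x) prob p x * (1 + potential x (i |: T)).
Proof.
move=> hD; have hfalse := false_potential_step i hD.
have htrue : \sum_(x | D x) prob p x * true_potential x T <=
             \sum_(x | D x) prob p x * ((f x)%:R + true_potential x (i |: T)).
  by apply: ler_sum => x _; rewrite ler_wpM2l ?prob_ge0 ?true_potential_step.
rewrite (eq_bigr (fun x => prob p x * true_potential x T + prob p x * false_potential x T));
  last by move=> x _; rewrite mulrDr.
rewrite [X in _ <= X](eq_bigr (fun x =>
    prob p x * ((f x)%:R + true_potential x (i |: T)) +
    prob p x * ((~~ f x)%:R + false_potential x (i |: T)))); last first.
  by move=> x _; rewrite /potential; case: (f x) => /=; ring.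
by rewrite !big_split lerD.
Qed.

Lemma potential_set0 x :
  potential x set0 = (f x)%:R * k%:R + \sum_j (others_false j x)%:R * false_cost p (sorted_term j).
Proof.
rewrite /potential /true_potential /false_potential.
have -> : max_tested x set0 = 0%N.
  by apply/eqP; rewrite -leqn0; apply/bigmax_leqP => j _; rewrite set0I cards0.
congr (_ + _); first by case: (f x); rewrite /= ?mul1r ?mul0r ?subr0.
apply: eq_bigr => j _; rewrite /open_cost.
have -> : term_open j x set0 by apply/forall_inP => i; rewrite set0I inE.
by rewrite /untested (eq_filter (a2 := predT)) ?filter_predT // => i; rewrite inE.
Qed.

Lemma cost_adaptive_ge_potential (t : dtree n) : adaptive_strategy f t ->
  \sum_x prob p x * potential x set0 <= cost_adaptive f (fun _ => 1) p t.
Proof.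
move=> valid.
by apply: (tree_cost_ge_potential p_range potential_determined_le0 potential_step) => // x _.
Qed.

Hypothesis n_eq : n = (k * m)%N.

Definition term_of i : 'I_m := xchoose (terms_cover i).

Lemma term_of_mem i : i \in terms (term_of i).
Proof. exact: xchooseP (terms_cover i). Qed.

Lemma term_ofE i j : i \in terms j -> term_of i = j.
Proof.
move=> ij; apply/eqP; apply: contraT; rewrite eq_sym => ne.
by have := notin_other_term (term_of_mem i) ne; rewrite ij.
Qed.

Definition rank i := index i (sorted_term (term_of i)).

Lemma rank_lt i : (rank i < k)%N.
Proof. by rewrite -(size_sorted_term (term_of i)) index_mem mem_sorted_term term_of_mem. Qed.

Lemma slot_lt i : (rank i * m + term_of i < n)%N.
Proof. by rewrite n_eq; have := rank_lt i; have := ltn_ord (term_of i); nia. Qed.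

Definition slot i : 'I_n := Ordinal (slot_lt i).

Lemma slot_inj : injective slot.
Proof.
move=> i i' /(congr1 val) /= e.
have m_gt0 : (0 < m)%N by apply: leq_ltn_trans (ltn_ord (term_of i)).
have et : term_of i = term_of i'.
  by apply: val_inj; have := congr1 (modn^~ m) e; rewrite /= !modnMDl !modn_small.
have er : rank i = rank i'.
  by have := congr1 (divn^~ m) e; rewrite /= !divnMDl // !divn_small // !addn0.
have nth_rank j : nth i (sorted_term (term_of j)) (rank j) = j.
  by rewrite nth_index // mem_sorted_term term_of_mem.
by rewrite -(nth_rank i) -[RHS]nth_rank et er.
Qed.

Definition round_robin : {perm 'I_n} := (perm slot_inj)^-1.

Lemma mem_prefix_round_robin i (r : 'I_n) : (i \in Defs.prefix round_robin r) = (slot i < r)%N.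
Proof.
apply/imsetP/idP => [[j]|lt_ir].
  by rewrite inE => jr ->; have := permE slot_inj (round_robin j); rewrite permKV => <-.
by exists (perm slot_inj i); [rewrite inE permE | rewrite /round_robin permK].
Qed.

Definition num_tests x : R :=
  \sum_(r < n) (if determined f x (Defs.prefix round_robin r) then 0 else 1).

Lemma num_testsE x :
  num_tests x = \sum_i (if determined f x [set i' | (slot i' < slot i)%N] then 0 else 1).
Proof.
rewrite /num_tests (reindex_inj (@perm_inj _ (perm slot_inj))) /=; apply: eq_bigr => i _.
suff -> : Defs.prefix round_robin (perm slot_inj i) = [set i' | (slot i' < slot i)%N] by [].
by apply/setP => i'; rewrite mem_prefix_round_robin inE permE.
Qed.

Lemma num_tests_le x : num_tests x <= (k * m)%:R.
Proof.
rewrite -n_eq -[X in _ <= X%:R]card_ord -sumr_const.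
by apply: ler_sum => r _; case: ifP.
Qed.

Lemma determined_false_witness (x : input n) (P : {set 'I_n}) :
  (forall j, exists2 i, i \in P & (i \in terms j) && ~~ x i) -> determined f x P.
Proof.
move=> wit; apply/forallP => y; apply/implyP => /forall_inP yx.
suff dnf0 (z : input n) : (forall i, i \in P -> z i = x i) -> f z = false.
  by rewrite !dnf0 // => i /yx /eqP.
move=> zx; apply/negbTE/existsPn => j; have [i iP /andP[ij xi]] := wit j.
by apply/forall_inPn; exists i; rewrite ?zx.
Qed.

Lemma sum_rank (F : nat -> R) : \sum_i F (rank i) = m%:R * \sum_(r < k) F r.
Proof.
rewrite (partition_big term_of predT) //=.
transitivity (\sum_(j < m) \sum_(r < k) F r); last by rewrite sumr_const card_ord mulr_natl.
apply: eq_bigr => j _.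
rewrite (eq_bigl (fun i => i \in terms j)); last first.
  by move=> i; apply/eqP/idP => [<-|/term_ofE //]; apply: term_of_mem.
rewrite (eq_bigr (fun i => F (index i (sorted_term j)))); last first.
  by move=> i ij; rewrite /rank (term_ofE ij).
have sorted_enum : perm_eq (sorted_term j) (enum (terms j)) by rewrite perm_sort.
by rewrite -big_enum -(perm_big _ sorted_enum) sum_index ?sorted_term_uniq // size_sorted_term.
Qed.

Lemma num_tests_false_le x : ~~ f x ->
  num_tests x <= m%:R * \sum_j \sum_(r < k) (all x (take r (sorted_term j)))%:R.
Proof.
move=> fx; rewrite num_testsE.
apply: le_trans (_ : _ <= \sum_i \sum_j (all x (take (rank i) (sorted_term j)))%:R) _.
  apply: ler_sum => i _.
  have sum_ge0 (P : pred 'I_m) :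
    0 <= \sum_(j | P j) (all x (take (rank i) (sorted_term j)))%:R :> R.
    by apply: sumr_ge0 => j _; rewrite ler0n.
  case: (boolP [exists j, all x (take (rank i) (sorted_term j))]) => [/existsP[j xj]|].
    case: ifP => _; first exact: sum_ge0.
    by rewrite (bigD1 j) //= xj -[X in X <= _]addr0 lerD ?sum_ge0.
  move=> /existsPn none; rewrite ifT; first exact: sum_ge0.
  apply: determined_false_witness => j.
  have /allPn[i' i'_take xi'] := none j.
  have i'j : i' \in terms j by rewrite -mem_sorted_term (mem_take i'_take).
  exists i'; last by rewrite i'j xi'.
  have : (rank i' < rank i)%N by rewrite /rank (term_ofE i'j) index_ltn.
  by rewrite inE /=; have := ltn_ord (term_of i'); nia.
rewrite exchange_big /= mulr_sumr; apply: ler_sum => j _.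
by rewrite (sum_rank (fun r => (all x (take r (sorted_term j)))%:R)).
Qed.

Lemma expected_false_tests j :
  \sum_x prob p x * ((~~ f x)%:R * \sum_(r < k) (all x (take r (sorted_term j)))%:R) =
  false_cost p (sorted_term j) * \sum_(x | others_false j x) prob p x.
Proof.
have flip_inv i : i \in sorted_term j -> flip_invariant (others_false j) i.
  by rewrite mem_sorted_term; apply: others_false_flip.
rewrite false_costE size_sorted_term mulr_suml.
under [X in X = _]eq_bigr do rewrite mulr_sumr mulr_sumr.
rewrite exchange_big /=; apply: eq_bigr => r _.
rewrite -sum_prob_take_not_all ?sorted_term_uniq // [RHS]big_mkcond /=.
apply: eq_bigr => x _; rewrite (dnfN_others_false x j) term_trueE.
by case: (others_false j x); case: (all x (sorted_term j)); case: (all x (take r _));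
  rewrite /= ?mul0r ?mulr0 ?mulr1.
Qed.

Lemma cost_nonadaptive_le_potential :
  cost_nonadaptive f (fun _ => 1) p round_robin <= m%:R * \sum_x prob p x * potential x set0.
Proof.
pose U (x : input n) : R := (f x)%:R * k%:R +
  (~~ f x)%:R * \sum_j \sum_(r < k) (all x (take r (sorted_term j)))%:R.
apply: le_trans (_ : _ <= m%:R * \sum_x prob p x * U x) _.
  rewrite mulr_sumr; apply: ler_sum => x _; rewrite mulrCA ler_wpM2l ?prob_ge0 // -/(num_tests x).
  rewrite /U; case fx: (f x) => /=; last by rewrite mul0r add0r mul1r num_tests_false_le ?fx.
  by rewrite mul1r mul0r addr0 -natrM mulnC num_tests_le.
rewrite ler_wpM2l ?ler0n // le_eqVlt; apply/orP; left; apply/eqP.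
under eq_bigr do rewrite mulrDr.
under [X in _ = X]eq_bigr do rewrite potential_set0 mulrDr.
rewrite !big_split /=; congr (_ + _).
under eq_bigr do rewrite mulr_sumr mulr_sumr.
under [X in _ = X]eq_bigr do rewrite mulr_sumr.
rewrite exchange_big [RHS]exchange_big; apply: eq_bigr => j _ /=.
rewrite expected_false_tests mulr_sumr [LHS]big_mkcond /=; apply: eq_bigr => x _.
by case: (others_false j x); rewrite /= ?mul1r ?mul0r ?mulr0 // mulrC.
Qed.

Lemma cost_round_robin_le (t : dtree n) : adaptive_strategy f t ->
  cost_nonadaptive f (fun _ => 1) p round_robin <= m%:R * cost_adaptive f (fun _ => 1) p t.
Proof.
move=> valid; apply: le_trans cost_nonadaptive_le_potential _.
by rewrite ler_wpM2l ?ler0n ?cost_adaptive_ge_potential.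
Qed.

End ReadOnceDNF.

Theorem lemma2 (R : realFieldType) (n m : nat) (terms : 'I_m -> {set 'I_n})
    (p : 'I_n -> R) :
  (forall j1 j2 : 'I_m, j1 != j2 -> [disjoint terms j1 & terms j2]) ->
  (forall i : 'I_n, exists j : 'I_m, i \in terms j) ->
  (forall j : 'I_m, (#|terms j| * m)%N = n) ->
  (forall i, 0 < p i < 1) ->
  exists s : {perm 'I_n},
    forall t : dtree n, adaptive_strategy (dnf terms) t ->
      cost_nonadaptive (dnf terms) (fun _ => 1) p s
        <= m%:R * cost_adaptive (dnf terms) (fun _ => 1) p t.
Proof.
move=> disjoint cover card_terms p_range.
have card_termsE j : #|terms j| = (n %/ m)%N.
  by rewrite -[n in (n %/ m)%N](card_terms j) mulnK // (leq_ltn_trans _ (ltn_ord j)).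
have n_eq : n = (n %/ m * m)%N.
  case: (posnP n) => [->|n_gt0]; first by rewrite div0n.
  by have [j _] := cover (Ordinal n_gt0); rewrite -(card_termsE j) card_terms.
exists (round_robin p cover card_termsE n_eq) => t.
exact: (cost_round_robin_le p_range disjoint cover card_termsE n_eq).
Qed.
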